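(* For every integer $n \geqslant 5$, the line graph $L(K_n)$ of the complete graph $K_n$ is not representable.
   Context: All graphs are finite and simple. For a word $W$ over an alphabet, two distinct letters $x,y$ alternate in $W$ if both occur in $W$ and, after erasing all other letters from $W$, one obtains a word of the form $xyxy\ldots$ or $yxyx\ldots$ (an alternating word of any length). A graph $G=(V,E)$ is representable if there exists a word $W$ over the alphabet $V$ in which every vertex occurs, such that for all distinct $x,y\in V$, the letters $x$ and $y$ alternate in $W$ if and only if $(x,y)\in E$. The line graph $L(G)$ of a graph $G$ has the edges of $G$ as vertices, two of them being adjacent in $L(G)$ iff they share an endpoint in $G$. *)

From mathcomp Require Import all_boot.
Set Implicit Arguments. Unset Strict Implicit. Unset Printing Implicit Defensive.

(* A finite simple graph is given by a vertex finType T and an adjacency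
   relation e : rel T (symmetric, irreflexive). *)

Definition alternate (T : eqType) (W : seq T) (x y : T) : Prop :=
  x \in W /\ y \in W /\
  exists a b : T, ((a == x) && (b == y) || (a == y) && (b == x)) /\
    let s := [seq z <- W | (z == x) || (z == y)] in
    s = [seq (if odd i then b else a) | i <- iota 0 (size s)].

Definition representable (T : finType) (e : rel T) : Prop :=
  exists W : seq T, (forall v : T, v \in W) /\
    forall x y : T, x != y -> (alternate W x y <-> e x y).

Definition K_rel (n : nat) : rel 'I_n := fun x y => x != y.
Arguments K_rel n : clear implicits.

Definition is_edge (T : finType) (e : rel T) (A : {set T}) : bool :=
  [exists x, exists y, [&& x != y, e x y & A == [set x; y]]].

Definition edge_type (T : finType) (e : rel T) := {A : {set T} | is_edge e A}.

Definition line_rel (T : finType) (e : rel T) : rel (edge_type e) :=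
  fun A B => (A != B) && (val A :&: val B != set0).
Arguments line_rel {T} e A B.

From mathcomp Require Import all_boot zify.
Set Implicit Arguments. Unset Strict Implicit. Unset Printing Implicit Defensive.

(* If a word W represents a graph and x, y are adjacent, one of them leads the
   other: every prefix of W contains as many x's as y's, or exactly one more of
   the leader.  Comparing prefix counts shows that this orientation has no
   directed triangle, that a path x -> y -> z -> t together with x -> t forces
   x -> z and y -> t, and that non-adjacent letters never lead each other.  The
   seven edges 01, 02, 03, 12, 13, 24, 34 of K_5 induce a subgraph with 13 edges
   in L(K_5), hence in L(K_n), and an exhaustive check of its 2^13 orientations
   shows that none of them has these properties. *)

Section Leads.
Variable T : eqType.
Implicit Types (W P Q : seq T) (x y z : T).

Definition leads W x y : bool :=
  all (fun i => let P := take i W in count_mem y P <= count_mem x P <= (count_mem y P).+1)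
      (iota 0 (size W).+1).

Lemma leadsP W x y :
  reflect (forall P Q, W = P ++ Q -> count_mem y P <= count_mem x P <= (count_mem y P).+1)
          (leads W x y).
Proof.
apply: (iffP allP) => [lxy P Q eW | lxy i _].
  have := lxy (size P); rewrite eW take_size_cat //; apply.
  by rewrite mem_iota size_cat ltnS leq_addr.
by apply: (lxy _ (drop i W)); rewrite cat_take_drop.
Qed.

Lemma leads_refl W x : leads W x x.
Proof. by apply/allP => i _ /=; rewrite leqnn leqnSn. Qed.

Definition alternating x y m := [seq (if odd i then y else x) | i <- iota 0 m].

Lemma alternatingS x y m : alternating x y m.+1 = x :: alternating y x m.
Proof.
rewrite /alternating /= -[1]/(1 + 0) iotaDl -map_comp; congr (_ :: _).
by apply: eq_map => i /=; case: (odd i).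
Qed.

Lemma alternating_rcons x y m :
  alternating x y m.+1 = rcons (alternating x y m) (if odd m then y else x).
Proof. by rewrite /alternating -addn1 iotaD map_cat cats1. Qed.

Lemma size_alternating x y m : size (alternating x y m) = m.
Proof. by rewrite size_map size_iota. Qed.

Lemma take_alternating x y k m : take k (alternating x y m) = alternating x y (minn k m).
Proof. by rewrite /alternating -map_take take_iota. Qed.

Lemma count_alternating x y m : x != y ->
  count_mem x (alternating x y m) = uphalf m /\ count_mem y (alternating x y m) = half m.
Proof.
elim: m x y => [|m IH] x y xy //.
rewrite alternatingS /= eqxx (negbTE xy).
by rewrite eq_sym in xy; have [-> ->] := IH y x xy.
Qed.

Lemma count_mem_filter (p : pred T) s z : p z -> count_mem z (filter p s) = count_mem z s.
Proof.
by move=> pz; rewrite count_filter; apply: eq_count => w /=; case: eqP => // ->; rewrite pz.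
Qed.

Lemma count_filter_pred2 s x y :
  count_mem x (filter (pred2 x y) s) = count_mem x s /\
  count_mem y (filter (pred2 x y) s) = count_mem y s.
Proof. by split; apply: count_mem_filter; rewrite /= eqxx ?orbT. Qed.

Lemma leads_of_filter_alternating W x y m : x != y ->
  filter (pred2 x y) W = alternating x y m -> leads W x y.
Proof.
move=> xy eW; apply/leadsP => P Q ePQ.
have : filter (pred2 x y) P = alternating x y (minn (size (filter (pred2 x y) P)) m).
  by rewrite -take_alternating -eW ePQ filter_cat take_size_cat.
set k := minn _ _ => eP.
have [<- <-] := count_filter_pred2 P x y; rewrite eP.
have [-> ->] := count_alternating k xy.
by rewrite uphalf_half; case: (odd k) => /=; lia.
Qed.

Lemma filter_leads W x y : x != y -> leads W x y ->
  filter (pred2 x y) W = alternating x y (size (filter (pred2 x y) W)).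
Proof.
move=> xy; elim/last_ind: W => [|W z IH] //= /leadsP lxy.
have /IH {}IH : leads W x y.
  by apply/leadsP => P Q eW; apply: (lxy P (rcons Q z)); rewrite eW rcons_cat.
set m := size (filter (pred2 x y) W) in IH.
have := lxy (rcons W z) [::] (esym (cats0 _)).
rewrite -cats1 !count_cat; have [<- <-] := count_filter_pred2 W x y.
rewrite IH; have [-> ->] := count_alternating m xy; rewrite /= !addn0 uphalf_half.
rewrite filter_cat IH /=.
have [->|zx] := eqVneq z x.
  rewrite (negbTE xy) cats1 size_rcons size_alternating alternating_rcons.
  by case: (odd m) => //= ?; exfalso; lia.
have [->|zy] := eqVneq z y; last by rewrite cats0 size_alternating.
rewrite cats1 size_rcons size_alternating alternating_rcons.
by case: (odd m) => //= ?; exfalso; lia.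
Qed.

Lemma alternate_leads W x y : x != y -> alternate W x y -> leads W x y || leads W y x.
Proof.
move=> xy [_ [_ [a [b [/orP[] /andP[/eqP-> /eqP->] /= eW]]]]].
  by rewrite (leads_of_filter_alternating xy eW).
have yx : y != x by rewrite eq_sym.
apply/orP; right.
apply: (leads_of_filter_alternating (m := size (filter (pred2 x y) W)) yx).
by rewrite (@eq_filter _ _ (pred2 x y)) => [|z]; [exact: eW | exact: orbC].
Qed.

Lemma leads_alternate W x y : x != y -> x \in W -> y \in W -> leads W x y -> alternate W x y.
Proof.
move=> xy xW yW lxy; do 2!split=> //; exists x, y; rewrite !eqxx; split=> //.
exact: filter_leads.
Qed.

Lemma leads_antisym W x y : x != y -> x \in W -> leads W x y -> leads W y x -> False.
Proof.
move=> xy /splitPr[P Q] /leadsP lxy /leadsP lyx.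
have := lxy P (x :: Q) erefl; have := lyx P (x :: Q) erefl.
have := lyx (rcons P x) Q; rewrite cat_rcons => /(_ erefl).
by rewrite -cats1 !count_cat /= eqxx (negbTE xy); lia.
Qed.

Lemma leads_cycle3 W x y z : x != y -> x \in W ->
  leads W x y -> leads W y z -> leads W z x -> False.
Proof.
move=> xy xW lxy /leadsP lyz /leadsP lzx; apply: (leads_antisym xy xW lxy).
apply/leadsP => P Q eW; move/leadsP: lxy => /(_ P Q eW).
by have := lyz P Q eW; have := lzx P Q eW; lia.
Qed.

Lemma leads_shortcut W x y z t :
  leads W x y -> leads W y z -> leads W z t -> leads W x t -> leads W x z && leads W y t.
Proof.
move=> /leadsP lxy /leadsP lyz /leadsP lzt /leadsP lxt.
by apply/andP; split; apply/leadsP => P Q eW;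
  have := lxy P Q eW; have := lyz P Q eW; have := lzt P Q eW; have := lxt P Q eW; lia.
Qed.

End Leads.

Section LocalOrientation.
Variables (S : eqType) (V : seq S) (adj : rel S).

Record locally_semi_transitive (o : rel S) : Prop := LocallySemiTransitive {
  lst_refl : {in V, forall p, o p p};
  lst_total : {in V &, forall p q, adj p q -> o p q || o q p};
  lst_adj : {in V &, forall p q, p != q -> o p q -> adj p q};
  lst_antisym : {in V &, forall p q, p != q -> o p q -> ~~ o q p};
  lst_no_cycle3 : {in V & &, forall p q r, p != q -> o p q -> o q r -> ~~ o r p};
  lst_shortcut : forall p q r s, o p q -> o q r -> o r s -> o p s -> o p r && o q s
}.

(* [if] rather than [==>] keeps the exhaustive check below lazy. *)
Definition triangle_shortcut_free (o : rel S) : bool :=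
  all (fun p => all (fun q => if (p != q) && o p q then all (fun r => if o q r then
    ~~ o r p && all (fun s => if o r s && o p s then o p r && o q s else true) V
    else true) V else true) V) V.

Lemma lst_triangle_shortcut_free o :
  locally_semi_transitive o -> triangle_shortcut_free o.
Proof.
case=> _ _ _ _ no_cycle3 shortcut.
apply/allP => p pV; apply/allP => q qV; apply/implyP => /andP[pq opq].
apply/allP => r rV; apply/implyP => oqr; rewrite (no_cycle3 p q r) //=.
by apply/allP => s _; apply/implyP => /andP[ors ops]; apply: shortcut.
Qed.

Lemma eq_in_triangle_shortcut_free o1 o2 :
  {in V &, o1 =2 o2} -> triangle_shortcut_free o1 = triangle_shortcut_free o2.
Proof.
move=> eo; apply: eq_in_all => p pV; apply: eq_in_all => q qV; rewrite eo //.
congr (_ ==> _); apply: eq_in_all => r rV; rewrite !eo //.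
by congr (_ ==> _ && _); apply: eq_in_all => s sV; rewrite !eo.
Qed.

End LocalOrientation.

Lemma leads_locally_semi_transitive (S T : eqType) (V : seq S) (adj : rel S)
    (f : S -> T) (W : seq T) :
  (forall p, f p \in W) -> {in V &, injective f} ->
  {in V &, forall p q, p != q -> alternate W (f p) (f q) <-> adj p q} ->
  locally_semi_transitive V adj (fun p q => leads W (f p) (f q)).
Proof.
move=> fW f_inj f_rep.
have f_neq : {in V &, forall p q, p != q -> f p != f q}.
  by move=> p q pV qV; rewrite (inj_in_eq f_inj).
split=> [p _ | p q pV qV adj_pq | p q pV qV pq lpq | p q pV qV pq lpq |
         p q r pV qV rV pq lpq lqr | p q r s]; rewrite /=.
- exact: leads_refl.
- have [<-|pq] := eqVneq p q; first by rewrite leads_refl.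
  by apply: alternate_leads; [exact: f_neq | apply/f_rep].
- by apply/f_rep => //; apply: leads_alternate => //; exact: f_neq.
- by apply/negP; apply: leads_antisym lpq; [exact: f_neq | exact: fW].
- by apply/negP; apply: leads_cycle3 lpq lqr; [exact: f_neq | exact: fW].
- exact: leads_shortcut.
Qed.

Definition K5_pairs : seq (nat * nat) :=
  [:: (0, 1); (0, 2); (0, 3); (1, 2); (1, 3); (2, 4); (3, 4)].

Definition K5_pair (i : nat) : nat * nat := nth (0, 0) K5_pairs i.

Definition gadget : seq nat := iota 0 (size K5_pairs).

Lemma K5_pair_lt : {in gadget, forall i, (K5_pair i).1 < (K5_pair i).2 < 5}.
Proof. by apply/allP. Qed.

Lemma K5_pair_inj : {in gadget &, injective K5_pair}.
Proof.
move=> i j; rewrite !mem_iota => /andP[_ i7] /andP[_ j7] /eqP.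
by rewrite nth_uniq // => /eqP.
Qed.

Definition meet (p q : nat * nat) : bool :=
  [|| p.1 == q.1, p.1 == q.2, p.2 == q.1 | p.2 == q.2].

Definition gadget_adj (i j : nat) : bool := (i != j) && meet (K5_pair i) (K5_pair j).

Definition gadget_edges : seq (nat * nat) :=
  [:: (0, 1); (0, 2); (0, 3); (0, 4); (1, 2); (1, 3); (1, 5);
      (2, 4); (2, 6); (3, 4); (3, 5); (4, 6); (5, 6)].

Lemma gadget_adjE : {in gadget &, forall i j,
  gadget_adj i j = ((i, j) \in gadget_edges) || ((j, i) \in gadget_edges)}.
Proof.
have chk : all (fun i => all (fun j =>
    gadget_adj i j == ((i, j) \in gadget_edges) || ((j, i) \in gadget_edges)) gadget) gadget.
  by vm_compute.
by move=> i j iV jV; apply/eqP; move/allP: chk => /(_ i iV) /allP /(_ j jV).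
Qed.

Definition orient_edge (bs : seq bool) (i j : nat) : bool :=
  if (i, j) \in gadget_edges then nth false bs (index (i, j) gadget_edges)
  else if (j, i) \in gadget_edges then ~~ nth false bs (index (j, i) gadget_edges)
  else i == j.

(* Tabulated, so that the exhaustive check evaluates [orient_edge] once per pair. *)
Definition orientation (bs : seq bool) : rel nat :=
  let t := [seq [seq orient_edge bs i j | j <- gadget] | i <- gadget] in
  fun i j => nth false (nth [::] t i) j.

Lemma orientationE bs : {in gadget &, orientation bs =2 orient_edge bs}.
Proof.
move=> i j; rewrite !mem_iota /= => i7 j7.
by rewrite /orientation (nth_map 0) ?size_iota // (nth_map 0) ?size_iota // !nth_iota.
Qed.

Fixpoint bitseqs (n : nat) : seq (seq bool) :=
  if n is n'.+1 then [seq b :: bs | b <- [:: true; false], bs <- bitseqs n'] else [:: [::]].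

Lemma mem_bitseqs n bs : size bs = n -> bs \in bitseqs n.
Proof.
elim: n bs => [|n IH] [|b bs] // [] /IH bsn /=.
by case: b; rewrite !mem_cat (map_f _ bsn) ?orbT.
Qed.

Lemma gadget_orientations_not_triangle_shortcut_free :
  all (fun bs => ~~ triangle_shortcut_free gadget (orientation bs)) (bitseqs 13).
Proof. by vm_compute. Qed.

Lemma orient_edge_bits o : locally_semi_transitive gadget gadget_adj o ->
  {in gadget &, orient_edge [seq o e.1 e.2 | e <- gadget_edges] =2 o}.
Proof.
move=> lst i j iV jV; rewrite /orient_edge.
have bit e : e \in gadget_edges ->
    nth false [seq o e.1 e.2 | e <- gadget_edges] (index e gadget_edges) = o e.1 e.2.
  by move=> eE; rewrite (nth_map e) ?index_mem // nth_index.
have [ijE|ijE] := boolP ((i, j) \in gadget_edges); first exact: bit.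
have [jiE|jiE] := boolP ((j, i) \in gadget_edges).
  have adj_ij : gadget_adj i j by rewrite gadget_adjE // jiE orbT.
  have ji : j != i by case/andP: adj_ij; rewrite eq_sym.
  rewrite bit //=; have := lst_total lst iV jV adj_ij.
  have [oji|_] := boolP (o j i); last by rewrite orbF => ->.
  by rewrite (negbTE (lst_antisym lst jV iV ji oji)).
have [<-|ij] := eqVneq i j; first by rewrite (lst_refl lst).
apply/esym/negbTE/negP => /(lst_adj lst iV jV ij).
by rewrite gadget_adjE // (negbTE ijE) (negbTE jiE).
Qed.

Lemma gadget_not_locally_semi_transitive o :
  ~ locally_semi_transitive gadget gadget_adj o.
Proof.
move=> lst; pose bs := [seq o e.1 e.2 | e <- gadget_edges].
have /mem_bitseqs bsP : size bs = 13 by rewrite size_map.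
have := allP gadget_orientations_not_triangle_shortcut_free bs bsP.
rewrite (eq_in_triangle_shortcut_free (orientationE bs)).
rewrite (eq_in_triangle_shortcut_free (orient_edge_bits lst)).
by rewrite (lst_triangle_shortcut_free lst).
Qed.

Lemma setI_set2_neq0 (T : finType) (a b c d : T) :
  ([set a; b] :&: [set c; d] != set0) = [|| a == c, a == d, b == c | b == d].
Proof.
apply/set0Pn/idP => [[x /setIP[]]|].
  by rewrite !inE => /orP[]/eqP-> /orP[]/eqP->; rewrite eqxx ?orbT.
by case/or4P => /eqP e; [exists a | exists a | exists b | exists b];
  rewrite !inE e !eqxx ?orbT.
Qed.

Lemma is_edge_K n (x y : 'I_n) : x != y -> is_edge (K_rel n) [set x; y].
Proof.
by move=> xy; apply/existsP; exists x; apply/existsP; exists y; rewrite /K_rel xy eqxx.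
Qed.

(* Pairs that do not name an edge of [K_(n+2)] are sent to the junk edge [{0, n+1}]. *)
Definition K_edge (n : nat) (p : nat * nat) : edge_type (K_rel n.+2) :=
  let junk : edge_type (K_rel n.+2) :=
    exist _ [set ord0; ord_max] (is_edge_K (isT : ord0 != ord_max :> 'I_n.+2)) in
  insubd junk [set inord p.1; inord p.2].

Lemma val_K_edge n p : p.1 < p.2 < n.+2 -> val (K_edge n p) = [set inord p.1; inord p.2].
Proof.
case/andP=> lt12 lt2; rewrite insubdK //; apply: is_edge_K.
by rewrite -val_eqE /= !inordK ?(ltn_trans lt12) //; lia.
Qed.

Lemma K_edge_inj n p q : p.1 < p.2 < n.+2 -> q.1 < q.2 < n.+2 ->
  K_edge n p = K_edge n q -> p = q.
Proof.
move=> ltp ltq epq; have := val_K_edge ltp; rewrite {}epq (val_K_edge ltq) => e.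
case: p q ltp ltq e => [a b] [c d] /= ltab ltcd e.
have mem (x : 'I_n.+2) : (x \in [set inord a; inord b]) = (x \in [set inord c; inord d]).
  by rewrite e.
apply/eqP; rewrite xpair_eqE /=.
move: (mem (inord a)) (mem (inord b)) (mem (inord c)) (mem (inord d)).
by rewrite !inE -!val_eqE /= !inordK; lia.
Qed.

Lemma line_rel_set2 (T : finType) (e : rel T) (A B : edge_type e) (a b c d : T) :
  val A = [set a; b] -> val B = [set c; d] ->
  line_rel e A B = (A != B) && [|| a == c, a == d, b == c | b == d].
Proof. by move=> eA eB; rewrite /line_rel eA eB setI_set2_neq0. Qed.

Lemma line_rel_K_edge n p q : p.1 < p.2 < n.+2 -> q.1 < q.2 < n.+2 ->
  line_rel (K_rel n.+2) (K_edge n p) (K_edge n q) = (K_edge n p != K_edge n q) && meet p q.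
Proof.
move=> ltp ltq; rewrite (line_rel_set2 (val_K_edge ltp) (val_K_edge ltq)).
congr (_ && _); case: p q ltp ltq => [a b] [c d] /= ltab ltcd.
by rewrite -!val_eqE /= !inordK //; lia.
Qed.

Theorem theorem3 (n : nat) : 5 <= n -> ~ representable (line_rel (K_rel n)).
Proof.
case: n => [|[|n]] // n_ge5 [W [W_all W_rep]].
pose f i := K_edge n (K5_pair i).
have f_lt : {in gadget, forall i, (K5_pair i).1 < (K5_pair i).2 < n.+2}.
  by move=> i /K5_pair_lt /andP[-> lt5]; apply: leq_trans lt5 n_ge5.
have f_inj : {in gadget &, injective f}.
  by move=> i j iV jV /(K_edge_inj (f_lt i iV) (f_lt j jV)); apply: K5_pair_inj.
apply: (gadget_not_locally_semi_transitive (o := fun i j => leads W (f i) (f j))).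
apply: leads_locally_semi_transitive => // i j iV jV ij.
have fij : f i != f j by rewrite (inj_in_eq f_inj).
by rewrite W_rep // line_rel_K_edge ?f_lt // fij /gadget_adj ij.
Qed.
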